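(* Let $A\subset\mathbb{R}^d$ have positive reach and let $B\subset\mathbb{R}^d$ satisfy $A\subset B\subset\mathrm{UP}(A)$. If $B$ is star-shaped relative to $A$, i.e. for every $p\in B$ the line segment from $p$ to $\xi_A(p)$ is contained in $B$, then $B$ deformation retracts onto $A$.
   Context: For closed $A\subset\mathbb{R}^d$: $\mathrm{UP}(A)$ is the set of points of $\mathbb{R}^d$ with a unique nearest point in $A$, $\xi_A:\mathrm{UP}(A)\to A$ maps a point to that nearest point, $\mathrm{Med}(A)=\mathbb{R}^d\setminus\mathrm{UP}(A)$, and the reach is $\tau_A=\inf_{p\in A}d(p,\mathrm{Med}(A))$; positive reach means $\tau_A>0$. *)

(* R^d is 'rV[R]_d over a realType R,
   with the EUCLIDEAN distance defined explicitly (the library's norm on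
   'rV is the sup norm; nearest points depend on the norm).  The topology
   on 'rV[R]_d (product topology) coincides with the Euclidean one. *)
From HB Require Import structures.
From mathcomp Require Import all_boot all_order all_algebra.
From mathcomp Require Import all_classical all_reals all_analysis.
Set Implicit Arguments. Unset Strict Implicit. Unset Printing Implicit Defensive.
Import Order.TTheory GRing.Theory Num.Theory.
Import numFieldNormedType.Exports.
Local Open Scope classical_set_scope.
Local Open Scope ring_scope.

Section Reach.
Variables (R : realType) (d : nat).
Notation V := 'rV[R]_d.

Definition edist (x y : V) : R := Num.sqrt (\sum_(i < d) (x ord0 i - y ord0 i) ^+ 2).

Definition is_nearest (A : set V) (x p : V) : Prop :=
  A p /\ forall q, A q -> edist x p <= edist x q.

Definition UP (A : set V) : set V := [set x | exists! p, is_nearest A x p].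

Definition Med (A : set V) : set V := ~` UP A.

(* xi_A : UP(A) -> A, the nearest point map (arbitrary outside UP(A)) *)
Definition xi (A : set V) (x : V) : V := get (is_nearest A x).

(* d(p, S) as an extended real (inf of the empty set is +oo) *)
Definition setdist (p : V) (S : set V) : \bar R :=
  ereal_inf [set (edist p m)%:E | m in S].

Definition reach (A : set V) : \bar R :=
  ereal_inf [set setdist p (Med A) | p in A].

Definition positive_reach (A : set V) : Prop := closed A /\ (0 < reach A)%E.

Definition segment (p q : V) : set V :=
  [set (1 - t) *: p + t *: q | t in [set t : R | 0 <= t <= 1]].

Definition star_shaped_rel (A B : set V) : Prop :=
  forall p, B p -> segment p (xi A p) `<=` B.

Definition deformation_retracts_onto (B A : set V) : Prop :=
  exists H : V * R -> V,
    {within B `*` [set t : R | 0 <= t <= 1], continuous H} /\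
    (forall x t, B x -> 0 <= t <= 1 -> B (H (x, t))) /\
    (forall x, B x -> H (x, 0) = x) /\
    (forall x, B x -> A (H (x, 1))) /\
    (forall a t, A a -> 0 <= t <= 1 -> H (a, t) = a).

End Reach.

From Pilot Require Import Defs.
From HB Require Import structures.
From mathcomp Require Import all_boot all_order all_algebra.
From mathcomp Require Import all_classical all_reals all_analysis.
From mathcomp Require Import ring lra.
Import Order.TTheory GRing.Theory Num.Theory.
Import numFieldNormedType.Exports.
Local Open Scope classical_set_scope.
Local Open Scope ring_scope.
Local Notation edist := Pilot.Defs.edist.

(* The straight-line homotopy H(x, t) = (1 - t) x + t xi_A(x) stays in B by
   star-shapedness, fixes A pointwise and ends in A.  It is continuous because
   xi_A is continuous on UP(A) as soon as A is closed: for y close to x the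
   point xi_A(y) is an almost-nearest point of x in A, and by compactness of
   bounded closed sets the almost-nearest points of x cluster around its
   unique nearest point xi_A(x). *)

Lemma cauchy_schwarz_sum (R : realFieldType) (n : nat) (a b : 'I_n -> R) :
  (\sum_i a i * b i) ^+ 2 <= (\sum_i a i ^+ 2) * (\sum_i b i ^+ 2).
Proof.
rewrite -subr_ge0.
have sum_prod (f g : 'I_n -> R) :
    \sum_i \sum_j f i * g j = (\sum_i f i) * (\sum_j g j).
  by rewrite mulr_suml; apply: eq_bigr => i _; rewrite mulr_sumr.
(* Lagrange's identity *)
have -> : (\sum_i a i ^+ 2) * (\sum_i b i ^+ 2) - (\sum_i a i * b i) ^+ 2
    = (\sum_i \sum_j (a i * b j - a j * b i) ^+ 2) / 2.
  have -> : \sum_i \sum_j (a i * b j - a j * b i) ^+ 2 =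
      \sum_i \sum_j (a i ^+ 2 * b j ^+ 2) + \sum_i \sum_j (a j ^+ 2 * b i ^+ 2)
      - 2 * \sum_i \sum_j (a i * b i * (a j * b j)).
    rewrite -big_split /= mulr_sumr -sumrB; apply: eq_bigr => i _.
    rewrite -big_split /= mulr_sumr -sumrB; apply: eq_bigr => j _.
    ring.
  rewrite (exchange_big _ _ _ _ _ (fun i j => a j ^+ 2 * b i ^+ 2)) /= !sum_prod.
  by rewrite expr2; field.
by apply: divr_ge0 => //; do 2!apply: sumr_ge0 => ? _; exact: sqr_ge0.
Qed.

Section Euclidean.
Context {R : realType} {d : nat}.
Notation V := 'rV[R]_d.
Implicit Types x y z p q : V.

Definition enorm (u : V) : R := Num.sqrt (\sum_i u ord0 i ^+ 2).

Lemma edistE x y : edist x y = enorm (x - y).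
Proof. by rewrite /edist /enorm; congr Num.sqrt; apply: eq_bigr => i _; rewrite !mxE. Qed.

Lemma enorm_ge0 (u : V) : 0 <= enorm u.
Proof. exact: sqrtr_ge0. Qed.

Lemma ler_enormD (u v : V) : enorm (u + v) <= enorm u + enorm v.
Proof.
have sq_ge0 (w : V) : 0 <= \sum_i w ord0 i ^+ 2.
  by apply: sumr_ge0 => i _; exact: sqr_ge0.
rewrite -(ger0_norm (addr_ge0 (enorm_ge0 u) (enorm_ge0 v))) -sqrtr_sqr /enorm.
rewrite ler_sqrt ?sqr_ge0 // sqrrD !sqr_sqrtr //.
have -> : \sum_i (u + v) ord0 i ^+ 2 = \sum_i u ord0 i ^+ 2 + \sum_i v ord0 i ^+ 2
    + 2 * \sum_i u ord0 i * v ord0 i.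
  by rewrite mulr_sumr -!big_split /=; apply: eq_bigr => i _; rewrite mxE; ring.
suff : \sum_i u ord0 i * v ord0 i <=
    Num.sqrt (\sum_i u ord0 i ^+ 2) * Num.sqrt (\sum_i v ord0 i ^+ 2).
  by rewrite -mulr_natl; lra.
rewrite -sqrtrM // (le_trans (ler_norm _)) // -sqrtr_sqr ler_sqrt ?mulr_ge0 //.
exact: cauchy_schwarz_sum.
Qed.

Lemma edist_ge0 x y : 0 <= edist x y.
Proof. exact: sqrtr_ge0. Qed.

Lemma edistC x y : edist x y = edist y x.
Proof. by rewrite /edist; congr Num.sqrt; apply: eq_bigr => i _; rewrite -sqrrN opprB. Qed.

Lemma edistxx x : edist x x = 0.
Proof. by rewrite /edist big1 ?sqrtr0 // => i _; rewrite subrr expr0n. Qed.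

Lemma edist_eq0 x y : edist x y = 0 -> x = y.
Proof.
move/eqP; rewrite sqrtr_eq0 => le0.
have sum0 : \sum_i (x ord0 i - y ord0 i) ^+ 2 = 0.
  by apply/eqP; rewrite eq_le le0; apply: sumr_ge0 => i _; exact: sqr_ge0.
apply/matrixP => i j; rewrite (ord1 i).
have /eqP := psumr_eq0P (fun i _ => sqr_ge0 (x ord0 i - y ord0 i)) sum0 (i := j) isT.
by rewrite sqrf_eq0 subr_eq0 => /eqP.
Qed.

Lemma edist_triangle x y z : edist x z <= edist x y + edist y z.
Proof. by rewrite !edistE -[x - z](subrKA y); exact: ler_enormD. Qed.

Lemma edist_lipschitz x p q : `|edist x p - edist x q| <= edist p q.
Proof.
have := edist_triangle x q p; have := edist_triangle x p q.
by rewrite (edistC q p) ler_norml => *; apply/andP; split; lra.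
Qed.

Lemma normB_le_edist x y : `|x - y| <= edist x y.
Proof.
rewrite [leLHS]/Num.norm /= mx_normrE.
apply: bigmax_le => [|[i j] _ /=]; first exact: edist_ge0.
rewrite (ord1 i) !mxE -sqrtr_sqr ler_sqrt; last by apply: sumr_ge0 => k _; exact: sqr_ge0.
by rewrite (bigD1 j) //= lerDl; apply: sumr_ge0 => k _; exact: sqr_ge0.
Qed.

Lemma edist_le_normB x y : edist x y <= Num.sqrt d%:R * `|x - y|.
Proof.
rewrite -(ger0_norm (normr_ge0 (x - y))) -sqrtr_sqr -sqrtrM // ler_sqrt;
  last by apply: mulr_ge0 => //; exact: sqr_ge0.
have -> : d%:R * `|x - y| ^+ 2 = \sum_(i < d) `|x - y| ^+ 2.
  by rewrite sumr_const card_ord mulr_natl.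
apply: ler_sum => i _.
have entry_le : `|(x - y) ord0 i| <= `|x - y|.
  rewrite [leRHS]/Num.norm /= mx_normrE.
  exact: (le_bigmax_cond _ (j := (ord0, i)) (fun ij : 'I_1 * 'I_d => `|(x - y) ij.1 ij.2|)).
rewrite -real_normK ?num_real // -[leLHS]ger0_norm ?sqr_ge0 // normrX.
by rewrite lerXn2r ?nnegrE // normr_id; move: entry_le; rewrite !mxE.
Qed.

Lemma continuous_edist x : continuous (edist x).
Proof.
move=> p; apply/(@cvgrPdist_lt _ _ _ _ (nbhs_filter p)) => e e0.
have k0 : 0 < Num.sqrt (d%:R : R) + 1 by rewrite ltr_wpDl ?sqrtr_ge0.
have /cvgrPdist_lt/(_ (e / (Num.sqrt d%:R + 1))) near_p := @cvg_id _ (nbhs p).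
near=> q.
rewrite (le_lt_trans (edist_lipschitz x p q)) // (le_lt_trans (edist_le_normB p q)) //.
have : `|p - q| < e / (Num.sqrt d%:R + 1) by near: q; apply: near_p; exact: divr_gt0.
rewrite ltr_pdivlMr //; have := sqrtr_ge0 (d%:R : R); have := normr_ge0 (p - q); nra.
Unshelve. all: by end_near.
Qed.

Lemma near_edist x r : 0 < r -> \forall y \near x, edist x y < r.
Proof.
move=> r0; have /cvgrPdist_lt/(_ r r0) := continuous_edist x x.
by apply: filterS => y; rewrite edistxx sub0r normrN ger0_norm ?edist_ge0.
Qed.

Lemma compact_closed_edist_ball (S : set V) x r :
  closed S -> compact (S `&` [set p | edist x p <= r]).
Proof.
move=> cS; apply: bounded_closed_compact; last first.
  exact: closedI cS ((continuous_closedP _).1 (continuous_edist x) _ (@closed_le R r)).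
exists (`|x| + r); split; first exact: num_real.
move=> M /ltW xrM p [_ /= xp]; rewrite (le_trans _ xrM) // -[p](subrK x).
by rewrite (le_trans (ler_normD _ _)) // addrC lerD2l -normrN opprB (le_trans (normB_le_edist _ _)).
Qed.

End Euclidean.

Section NearestPoint.
Context {R : realType} {d : nat} {A : set 'rV[R]_d}.
Implicit Types x y p : 'rV[R]_d.

Lemma xi_nearest {x} : UP A x -> is_nearest A x (xi A x).
Proof. by case=> p [np _]; apply: getPex; exists p. Qed.

Lemma xi_unique {x p} : UP A x -> is_nearest A x p -> p = xi A x.
Proof. by move=> /[dup] /xi_nearest nxi [q [_ uq]] np; rewrite -(uq _ np) (uq _ nxi). Qed.

Lemma nearest_self {p} : A p -> is_nearest A p p.
Proof. by split => // q _; rewrite edistxx edist_ge0. Qed.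

Lemma sub_UP : A `<=` UP A.
Proof.
move=> a Aa; exists a; split; first exact: nearest_self.
move=> p [_ /(_ a Aa)]; rewrite edistxx => le0.
by apply: edist_eq0; apply/eqP; rewrite eq_le le0 edist_ge0.
Qed.

Lemma xi_id a : A a -> xi A a = a.
Proof. by move=> Aa; rewrite -(xi_unique (sub_UP _ Aa) (nearest_self Aa)). Qed.

Hypothesis closedA : closed A.

(* The points of A at distance >= e from xi_A(x) and <= d(x, A) + 1 from x
   form a compact set; the minimum of edist x on it exceeds d(x, A) because
   xi_A(x) is the only nearest point. *)
Lemma almost_nearest_near_xi {x e} : UP A x -> 0 < e ->
  exists2 eta, 0 < eta & forall p, A p ->
    edist x p < edist x (xi A x) + eta -> edist (xi A x) p < e.
Proof.
move=> UPx e0; have [Axi nxi] := xi_nearest UPx.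
set dA := edist x (xi A x).
pose K := (A `&` [set p | e <= edist (xi A x) p]) `&` [set p | edist x p <= dA + 1].
have [[c Kc] | K0] := pselect (K !=set0); last first.
  exists 1 => // p Ap xp; rewrite ltNge; apply/negP => ep; apply: K0.
  by exists p; split => //=; rewrite ltW.
have cK : compact K.
  apply: compact_closed_edist_ball; apply: closedI closedA _.
  exact: (continuous_closedP _).1 (continuous_edist (xi A x)) _ (@closed_ge R e).
have [m /set_mem Km minm] :=
  compact_EVT_min (ex_intro _ c Kc) cK (continuous_subspaceT (continuous_edist x)).
have far_m : dA < edist x m.
  case: Km => [[Am /= em] _]; rewrite lt_neqAle nxi // andbT.
  apply/negP => /eqP dm; have nm : is_nearest A x m.
    by split => // q Aq; rewrite -dm nxi.
  by move: em; rewrite -(xi_unique UPx nm) edistxx leNgt e0.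
exists (Num.min (edist x m - dA) 1).
  by rewrite lt_min subr_gt0 ltr01 andbT.
move=> p Ap xp; rewrite ltNge; apply/negP => ep.
have min_le1 : Num.min (edist x m - dA) 1 <= edist x m - dA by rewrite ge_min lexx.
have min_le2 : Num.min (edist x m - dA) 1 <= 1 by rewrite ge_min lexx orbT.
have Kp : K p by split; [split | rewrite /=; lra].
by have := minm p (mem_set Kp); lra.
Qed.

Lemma continuous_xi : {within UP A, continuous (xi A)}.
Proof.
apply/subspace_continuousP => x UPx; apply/cvgrPdist_lt => e e0.
have [eta eta0 near_xi] := almost_nearest_near_xi UPx e0.
have [Axi _] := xi_nearest UPx.
near=> y.
have [Ay ny] : is_nearest A y (xi A y) by apply: xi_nearest; near: y; exact: withinT.
have xy : edist x y < eta / 2.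
  by near: y; apply: cvg_within; apply: near_edist; exact: divr_gt0.
apply: le_lt_trans (normB_le_edist _ _) (near_xi _ Ay _).
have := edist_triangle x y (xi A y); have := ny _ Axi.
have := edist_triangle y x (xi A x); rewrite (edistC y x); lra.
Unshelve. all: by end_near.
Qed.

End NearestPoint.

Lemma continuous_line_homotopy {K : numFieldType} {V : normedModType K}
    {S : set V} {f : V -> V} :
  {within S, continuous f} ->
  {within S `*` [set: K], continuous (fun z : V * K => (1 - z.2) *: z.1 + z.2 *: f z.1)}.
Proof.
move=> /subspace_continuousP cf; apply/subspace_continuousP => z [Sz _].
have fst_cvg : fst @ within (S `*` setT) (nbhs z) --> z.1.
  by apply: cvg_within_filter; exact: cvg_fst.
have snd_cvg : snd @ within (S `*` setT) (nbhs z) --> z.2.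
  by apply: cvg_within_filter; exact: cvg_snd.
have f_cvg : (f \o fst) @ within (S `*` setT) (nbhs z) --> f z.1.
  apply: cvg_comp (cf _ Sz) => P /fst_cvg.
  by apply: filterS2 (withinT _ _) => w [Sw _]; apply.
by apply: cvgD; apply: cvgZ => //; apply: cvgB => //; exact: cvg_cst.
Qed.

Theorem mainTheorem13 (R : realType) (d : nat) (A B : set 'rV[R]_d) :
  positive_reach A ->
  A `<=` B -> B `<=` UP A ->
  star_shaped_rel A B ->
  deformation_retracts_onto B A.
Proof.
move=> [closedA _] _ BUP starB.
exists (fun z => (1 - z.2) *: z.1 + z.2 *: xi A z.1).
split; [|split; [|split; [|split]]].
- apply: (continuous_subspaceW _ (continuous_line_homotopy (continuous_xi closedA))).
  by move=> z [/BUP UPz _].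
- by move=> x t Bx t01; apply: starB Bx _ _; exists t.
- by move=> x _ /=; rewrite subr0 scale1r scale0r addr0.
- by move=> x /BUP /xi_nearest [Axi _] /=; rewrite subrr scale0r add0r scale1r.
- by move=> a t Aa _ /=; rewrite xi_id // -scalerDl subrK scale1r.
Qed.
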